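(* Let $(q_l)_{l\ge1}$ be positive numbers with $q_1=1$ and $0<R:=\lim_{l\to\infty}q_l/q_{l+1}<\infty$, and assume (EQ): $\tilde f(1)>1$, or $\tilde f(1)=1$ and $\tilde g(1)<\infty$. Let $\rho^*>0$. Then the infimum $$\tilde A_{\min}=\inf\{\tilde A(z):\ z\in X_{0+},\ \rho(z)=\rho^*\}$$ is attained, and a minimizer is $z^*_l=N^*\tilde q_l(\mu^* )^l$, $l\in\mathbb{N}$, where $\mu^*\in(0,1]$ is the unique solution of $\tilde f(\mu^* )=1$ and $N^*=\rho^*/\tilde g(\mu^* )$.
   Context: $X=\{z=(z_l)_{l\ge1}:\sum_l l|z_l|<\infty\}$, $X_{0+}$ its nonnegative elements, $\rho(z)=\sum_l lz_l$, $N(z)=\sum_l z_l$. Set $\tilde q_l=q_lR^l$, $\tilde f(\mu)=\sum_{l\ge1}\tilde q_l\mu^l$, $\tilde g(\mu)=\sum_{l\ge1}l\tilde q_l\mu^l$, $\tilde f(1)=\sum_l\tilde q_l\in(0,\infty]$, $\tilde g(1)=\sum_l l\tilde q_l\in(0,\infty]$. For $z\in X_{0+}\setminus\{0\}$, $\tilde A(z)=\sum_l z_l\ln\big(z_l/(\tilde q_lN(z))\big)$ with $0\ln0=0$, and $\tilde A(0)=0$. *)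

From HB Require Import structures.
From mathcomp Require Import all_boot all_order all_algebra.
From mathcomp Require Import all_classical all_reals all_analysis.
Set Implicit Arguments. Unset Strict Implicit. Unset Printing Implicit Defensive.
Import Order.TTheory GRing.Theory Num.Theory.
Import numFieldNormedType.Exports.
Local Open Scope classical_set_scope.
Local Open Scope ring_scope.

(* Sequences (z_l)_{l>=1} are represented as functions nat -> R; the value
   at index 0 is ignored by every definition below (all sums start at l = 1). *)

Section Defs.
Variable R : realType.

Definition qtilde (q : nat -> R) (Rr : R) (l : nat) : R := q l * Rr ^+ l.

Definition ftilde (q : nat -> R) (Rr : R) (mu : R) : \bar R :=
  (\sum_(1 <= l <oo) (qtilde q Rr l * mu ^+ l)%:E)%E.

Definition gtilde (q : nat -> R) (Rr : R) (mu : R) : \bar R :=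
  (\sum_(1 <= l <oo) (l%:R * qtilde q Rr l * mu ^+ l)%:E)%E.

Definition rho (z : nat -> R) : \bar R :=
  (\sum_(1 <= l <oo) (l%:R * z l)%:E)%E.

Definition Ntot (z : nat -> R) : \bar R :=
  (\sum_(1 <= l <oo) (z l)%:E)%E.

Definition X0plus (z : nat -> R) : Prop :=
  (forall l, (1 <= l)%N -> 0 <= z l) /\ (rho z < +oo)%E.

Definition Aterm (q : nat -> R) (Rr : R) (N : R) (z : nat -> R) (l : nat) : R :=
  if z l == 0 then 0 else z l * ln (z l / (qtilde q Rr l * N)).

Definition Atilde (q : nat -> R) (Rr : R) (z : nat -> R) : R :=
  if `[< forall l, (1 <= l)%N -> z l = 0 >] then 0
  else limn (fun n => \sum_(1 <= l < n) Aterm q Rr (fine (Ntot z)) z l).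

End Defs.

(* Since q_l / q_(l+1) -> R, the ratios of q~_l = q_l R^l tend to 1, so q~_l is
   squeezed between c 2^-l and C r^l for every r > 1.  Hence f~ and g~ are finite
   on [0, 1), and on [0, b] with b < 1 the function f~ is Lipschitz with constant
   g~(b) / b.  If f~(1) > 1, some partial sum of f~ already exceeds 1 at a point
   b < 1, and the intermediate value theorem on [0, b] yields a root of f~ = 1;
   it is unique because f~(b) >= (b / a) f~(a) for a <= b.
   Minimality is Gibbs' inequality z ln (z / p) >= z - p with p = N q~_l mu^l:
     z_l ln (z_l / (q~_l N)) >= l z_l ln mu + z_l - N q~_l mu^l,
   and the right-hand sides sum to rho ln mu + N - N f~(mu) = rho ln mu, with
   equality for z*_l = N* q~_l mu^l.  The bound q~_l >= c 2^-l dominates the terms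
   of A~(z) from above by a summable sequence, so the series A~(z) converges. *)

From HB Require Import structures.
From mathcomp Require Import all_boot all_order all_algebra.
From mathcomp Require Import all_classical all_reals all_analysis.
From mathcomp Require Import ring lra zify.
Import Order.TTheory GRing.Theory Num.Theory.
Import numFieldNormedType.Exports.
Local Open Scope classical_set_scope.
Local Open Scope ring_scope.

Section nonneg_real_series.
Context {R : realType}.
Implicit Types (u v : nat -> R) (m n : nat).

Lemma nneseries_partial_le u m n : (forall l, (m <= l)%N -> 0 <= u l) ->
  ((\sum_(m <= l < n) u l)%:E <= \sum_(m <= l <oo) (u l)%:E)%E.
Proof.
by move=> u0; rewrite -sumEFin; apply: nneseries_lim_ge => l /u0; rewrite lee_fin.
Qed.

Lemma nneseries_partial_cvg u m s : (forall l, (m <= l)%N -> 0 <= u l) ->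
  (\sum_(m <= l <oo) (u l)%:E)%E = s%:E ->
  (fun n => \sum_(m <= l < n) u l) @ \oo --> s.
Proof.
move=> u0 us.
have : (fun n => (\sum_(m <= l < n) (u l)%:E)%E) @ \oo --> s%:E.
  by rewrite -us; apply: is_cvg_nneseries => l /u0; rewrite lee_fin.
move=> /fine_cvgP[_]; apply: cvg_trans; apply: near_eq_cvg; near=> n.
by rewrite /= sumEFin.
Unshelve. all: end_near.
Qed.

Lemma lee_nneseriesEFin u v m : (forall l, (m <= l)%N -> 0 <= u l <= v l) ->
  (\sum_(m <= l <oo) (u l)%:E <= \sum_(m <= l <oo) (v l)%:E)%E.
Proof.
move=> uv.
rewrite (eseries_cond (fun l => (u l)%:E)) (eseries_cond (fun l => (v l)%:E)).
by apply: lee_nneseries => [l _|l] /andP[_ /uv/andP[? ?]]; rewrite lee_fin.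
Qed.

Lemma nneseriesEFin_le u m B : (forall l, (m <= l)%N -> 0 <= u l) ->
  (forall n, \sum_(m <= l < n) u l <= B) ->
  (\sum_(m <= l <oo) (u l)%:E <= B%:E)%E.
Proof.
move=> u0 uB; apply: lime_le; first by apply: is_cvg_nneseries => l /u0; rewrite lee_fin.
by apply: nearW => n; rewrite sumEFin lee_fin.
Qed.

Lemma nneseriesEFinZl u m c : 0 <= c -> (forall l, (m <= l)%N -> 0 <= u l) ->
  (\sum_(m <= l <oo) (c * u l)%:E = c%:E * \sum_(m <= l <oo) (u l)%:E)%E.
Proof.
move=> c0 u0.
rewrite (eseries_cond (fun l => (c * u l)%:E)) (eseries_cond (fun l => (u l)%:E)).
under eq_eseriesr do rewrite EFinM.
by apply: nneseriesZl => l /andP[_ /u0]; rewrite lee_fin.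
Qed.

Lemma nneseries_geometric_lt_pinfty m (C x : R) : 0 <= C -> 0 <= x < 1 ->
  (\sum_(m <= l <oo) (C * x ^+ l)%:E < +oo)%E.
Proof.
move=> C0 /andP[x0 x1].
have term_ge0 l : 0 <= C * x ^+ l by rewrite mulr_ge0 ?exprn_ge0.
apply: (@le_lt_trans _ _ (C / (1 - x))%:E); last exact: ltey.
apply: nneseriesEFin_le => // n.
apply: (@le_trans _ _ (\sum_(0 <= l < n) C * x ^+ l)).
  have [mn|nm] := leqP m n; last by rewrite big_geq ?sumr_ge0 // ltnW.
  by rewrite (big_cat_nat (leq0n m) mn) /= lerDr sumr_ge0.
have := congr1 (fun s => s n) (geometric_seriesE C (negbT (lt_eqF x1))).
rewrite /= seriesEnat /geometric /= => ->.
rewrite ler_wpM2r ?invr_ge0 ?subr_ge0 ?(ltW x1) // ler_piMr //.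
by rewrite lerBlDr lerDl exprn_ge0.
Qed.

End nonneg_real_series.

Section real_bounds.
Context {R : realType}.

Lemma subrXX_le (x y b : R) n : 0 <= x <= y -> y <= b ->
  y ^+ n - x ^+ n <= (y - x) * (n%:R * b ^+ n.-1).
Proof.
move=> /andP[x0 xy] yb.
have y0 : 0 <= y := le_trans x0 xy.
have term_le (i : 'I_n) : y ^+ (n.-1 - i) * x ^+ i <= b ^+ n.-1.
  have le_i : (i <= n.-1)%N by have := ltn_ord i; lia.
  rewrite -{2}(subnK le_i) exprD.
  have b0 : 0 <= b := le_trans y0 yb.
  by apply: ler_pM; rewrite ?exprn_ge0 // lerXn2r ?nnegrE ?(le_trans xy).
rewrite subrXX ler_wpM2l ?subr_ge0 //.
apply: le_trans (ler_sum _ (fun i _ => term_le i)) _.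
by rewrite sumr_const card_ord mulr_natl.
Qed.

Lemma geometric_bound_of_ratio (s : nat -> R) (r : R) :
  (forall l, (1 <= l)%N -> 0 < s l) -> 1 <= r ->
  (\forall l \near \oo, s l.+1 <= r * s l) ->
  exists2 C, 0 < C & forall l, (1 <= l)%N -> s l <= C * r ^+ l.
Proof.
move=> s0 r1 [N _ sN].
pose C := 1 + \sum_(1 <= k < N.+2) s k.
have sum_ge0 : 0 <= \sum_(1 <= k < N.+2) s k.
  by rewrite big_nat_cond sumr_ge0 // => k /andP[/andP[k1 _] _]; exact/ltW/s0.
have C0 : 0 < C by rewrite /C; lra.
have head l : (1 <= l <= N.+1)%N -> s l <= C * r ^+ l.
  move=> l_range; apply: le_trans (ler_peMr (ltW C0) (exprn_ege1 l r1)).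
  rewrite /C (bigD1_seq l) ?iota_uniq ?mem_index_iota //=.
  have : 0 <= \sum_(k <- index_iota 1 N.+2 | k != l) s k.
    rewrite big_seq_cond sumr_ge0 // => k /andP[].
    by rewrite mem_index_iota => /andP[k1 _] _; exact/ltW/s0.
  lra.
have tail k : s (N.+1 + k)%N <= C * r ^+ (N.+1 + k).
  elim: k => [|k ih]; first by rewrite addn0 head ?leqnn.
  rewrite addnS exprS mulrCA; apply: le_trans (sN _ _) _; first by rewrite /=; lia.
  by rewrite ler_wpM2l // (le_trans ler01 r1).
exists C => // l l1; have [lN|Nl] := leqP l N.+1; first by rewrite head ?l1.
by rewrite -(subnKC (ltnW Nl)) tail.
Qed.

Lemma exists_gt1_mul_lt1 (x : R) : 0 <= x < 1 -> exists2 r, 1 < r & r * x < 1.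
Proof.
move=> /andP[x0 x1]; exists (2 / (1 + x)).
  by rewrite ltr_pdivlMr ?mul1r; lra.
by rewrite mulrAC ltr_pdivrMr ?mul1r; lra.
Qed.

Lemma natr_le_geometric (r : R) : 1 < r ->
  exists2 C, 0 < C & forall l, (1 <= l)%N -> (l%:R : R) <= C * r ^+ l.
Proof.
move=> r1; apply: geometric_bound_of_ratio; [by move=> l; rewrite ltr0n | lra |].
near=> l.
have l_ge : (r - 1)^-1 <= l%:R by near: l; exact: nbhs_infty_ger.
have : 1 <= (r - 1) * l%:R by rewrite -ler_pdivrMl ?subr_gt0 // mulr1.
rewrite -natr1; lra.
Unshelve. all: end_near.
Qed.

Lemma lipschitz_within_continuous (A : set R) (F : R -> R) (k : R) : 0 <= k ->
  (forall x y, A x -> A y -> `|F x - F y| <= k * `|x - y|) ->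
  {within A, continuous F}.
Proof.
move=> k0 Flip; apply/subspace_continuousP => x Ax.
apply/cvgrPdist_lt => e e0; rewrite near_withinE.
have k1 : 0 < k + 1 by lra.
apply/nbhs_ballP; exists (e / (k + 1)); first exact: divr_gt0.
move=> t /= xt At; apply: le_lt_trans (Flip _ _ Ax At) _.
move: xt; rewrite /ball /= ltr_pdivlMr // => xt.
have := normr_ge0 (x - t); nra.
Qed.

Lemma series_sandwich_cvg (a c u : nat -> R) m (sc su : R) :
  (forall l, (m <= l)%N -> c l <= a l <= u l) ->
  (fun n => \sum_(m <= l < n) c l) @ \oo --> sc ->
  (fun n => \sum_(m <= l < n) u l) @ \oo --> su ->
  cvgn (fun n => \sum_(m <= l < n) a l) /\
  sc <= limn (fun n => \sum_(m <= l < n) a l).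
Proof.
move=> cau cc cu.
have ac0 l : (m <= l)%N -> true -> 0 <= a l - c l.
  by move=> /cau/andP[? _] _; rewrite subr_ge0.
have uc0 l : (m <= l)%N -> true -> 0 <= u l - c l.
  by move=> /cau/andP[ca au] _; rewrite subr_ge0 (le_trans ca au).
have cuc : (fun n => \sum_(m <= l < n) (u l - c l)) @ \oo --> su - sc.
  by under eq_fun do rewrite sumrB; exact: cvgB.
have cac : cvgn (fun n => \sum_(m <= l < n) (a l - c l)).
  apply: nondecreasing_is_cvgn; first exact: nondecreasing_series.
  exists (su - sc) => _ [n _ <-].
  rewrite -(cvg_lim _ cuc) //; apply: le_trans (nondecreasing_cvgn_le _ _ n).
  - by apply: ler_sum_nat => l /andP[/cau/andP[_ au] _]; rewrite lerD2r.
  - exact: nondecreasing_series.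
  - exact: cvgP cuc.
have aE : (fun n => \sum_(m <= l < n) a l) =
    (fun n => \sum_(m <= l < n) (a l - c l) + \sum_(m <= l < n) c l).
  by apply/funext => n; rewrite -big_split /=; apply: eq_bigr => l _; rewrite subrK.
have lim_ge0 : 0 <= limn (fun n => \sum_(m <= l < n) (a l - c l)).
  apply: limr_ge cac _; apply: nearW => n.
  by rewrite big_nat_cond sumr_ge0 // => l /andP[/andP[/ac0 + _] _]; apply.
rewrite aE; split; first by apply: is_cvgD; [exact: cac | exact: cvgP cc].
by rewrite limD // (cvg_lim _ cc) //; lra.
Qed.

Lemma sub_le_mul_ln_div (z p : R) : 0 < z -> 0 < p -> z - p <= z * ln (z / p).
Proof.
move=> z0 p0.
have pz0 : 0 < p / z by rewrite divr_gt0.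
have h : ln (p / z) <= p / z - 1.
  by have := @le_ln1Dx R (p / z - 1); rewrite [1 + _]addrC subrK; apply; lra.
rewrite -invf_div lnV ?posrE ?divr_gt0 // in h.
have -> : z - p = z * (1 - p / z) by field; rewrite gt_eqF.
rewrite ler_wpM2l ?(ltW z0) //; lra.
Qed.

End real_bounds.

Section sequence_mass.
Context {R : realType}.
Implicit Types z : nat -> R.

Lemma Ntot_le_rho z : (forall l, (1 <= l)%N -> 0 <= z l) -> (Ntot z <= rho z)%E.
Proof.
move=> z0; apply: lee_nneseriesEFin => l l1.
by rewrite z0 //= ler_peMl ?z0 // ler1n.
Qed.

Lemma Ntot_fin_num z : X0plus z -> Ntot z \is a fin_num.
Proof.
move=> [z0 rz]; rewrite ge0_fin_numE ?(le_lt_trans (Ntot_le_rho _ z0)) //.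
by rewrite /Ntot nneseries_ge0 // => l l1 _; rewrite lee_fin z0.
Qed.

Lemma le_Ntot z l : (forall k, (1 <= k)%N -> 0 <= z k) -> (1 <= l)%N ->
  ((z l)%:E <= Ntot z)%E.
Proof.
move=> z0 l1; apply: le_trans (nneseries_partial_le _ _ l.+1 z0).
by rewrite big_nat_recr //= lee_fin lerDr big_nat_cond sumr_ge0 // => k /andP[/andP[/z0]].
Qed.

End sequence_mass.

Section qtilde_theory.
Context {R : realType} (q : nat -> R) (Rr : R).
Hypothesis qpos : forall l, (1 <= l)%N -> 0 < q l.
Hypothesis Rpos : 0 < Rr.
Hypothesis Rlim : (fun l => q l / q l.+1) @ \oo --> Rr.
Local Notation qt := (qtilde q Rr).
Local Notation f := (ftilde q Rr).
Local Notation g := (gtilde q Rr).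

Lemma qtilde_gt0 l : (1 <= l)%N -> 0 < qt l.
Proof. by move=> l1; rewrite /qtilde mulr_gt0 ?exprn_gt0 ?qpos. Qed.

Lemma qtilde_ge0 l : (1 <= l)%N -> 0 <= qt l.
Proof. by move/qtilde_gt0/ltW. Qed.

Lemma qtilde_ratio_cvg : (fun l => qt l / qt l.+1) @ \oo --> (1 : R).
Proof.
have -> : (fun l => qt l / qt l.+1) = (fun l => q l / q l.+1 * Rr^-1).
  apply/funext => l; have ql1 : q l.+1 != 0 by rewrite gt_eqF ?qpos.
  by rewrite /qtilde exprS; field; rewrite ql1 !gt_eqF ?exprn_gt0.
by rewrite -(divff (lt0r_neq0 Rpos)); exact: cvgMr_tmp.
Qed.

Lemma qtilde_succ_le r : 1 < r -> \forall l \near \oo, qt l.+1 <= r * qt l.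
Proof.
move=> r1; have r0 : 0 < r by lra.
have r_inv : r^-1 < 1 by rewrite invf_lt1.
near=> l; have l1 : (1 <= l)%N by near: l; exact: nbhs_infty_ge.
have : r^-1 < qt l / qt l.+1 by near: l; exact: cvgr_gt qtilde_ratio_cvg _ r_inv.
rewrite ltr_pdivlMr ?qtilde_gt0 // -(ltr_pM2l r0) mulrA divff ?gt_eqF // mul1r.
exact: ltW.
Unshelve. all: end_near.
Qed.

Lemma qtilde_le_succ r : 1 < r -> \forall l \near \oo, qt l <= r * qt l.+1.
Proof.
move=> r1; near=> l; have l1 : (1 <= l)%N by near: l; exact: nbhs_infty_ge.
have : qt l / qt l.+1 < r by near: l; exact: cvgr_lt qtilde_ratio_cvg _ r1.
by rewrite ltr_pdivrMr ?qtilde_gt0 // => /ltW.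
Unshelve. all: end_near.
Qed.

Lemma qtilde_le_geometric r : 1 < r ->
  exists2 C, 0 < C & forall l, (1 <= l)%N -> qt l <= C * r ^+ l.
Proof.
move=> r1; apply: geometric_bound_of_ratio; [exact: qtilde_gt0 | lra |].
exact: qtilde_succ_le.
Qed.

Lemma qtilde_ge_geometric :
  exists2 c, 0 < c & forall l, (1 <= l)%N -> c / 2 ^+ l <= qt l.
Proof.
have [C C0 qtC] : exists2 C, 0 < C & forall l, (1 <= l)%N -> (qt l)^-1 <= C * 2 ^+ l.
  apply: geometric_bound_of_ratio; [by move=> l l1; rewrite invr_gt0 qtilde_gt0 | lra |].
  have two1 : (1 : R) < 2 by lra.
  near=> l; have l1 : (1 <= l)%N by near: l; exact: nbhs_infty_ge.
  have : qt l <= 2 * qt l.+1 by near: l; exact: qtilde_le_succ _ two1.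
  by rewrite -invf_div lef_pV2 ?posrE ?divr_gt0 ?qtilde_gt0 // ler_pdivrMr // mulrC.
exists C^-1; first by rewrite invr_gt0.
move=> l l1; rewrite -invfM -[qt l]invrK lef_pV2 ?qtC //.
  by rewrite posrE mulr_gt0 ?exprn_gt0.
by rewrite posrE invr_gt0 qtilde_gt0.
Unshelve. all: end_near.
Qed.

Lemma ftilde_term_ge0 x l : 0 <= x -> (1 <= l)%N -> 0 <= qt l * x ^+ l.
Proof. by move=> x0 l1; rewrite mulr_ge0 ?qtilde_ge0 ?exprn_ge0. Qed.

Lemma gtilde_term_ge0 x l : 0 <= x -> (1 <= l)%N -> 0 <= l%:R * qt l * x ^+ l.
Proof. by move=> x0 l1; rewrite -mulrA mulr_ge0 ?ftilde_term_ge0. Qed.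

Lemma ftilde_ge0 x : 0 <= x -> (0 <= f x)%E.
Proof. by move=> x0; apply: nneseries_ge0 => l l1 _; rewrite lee_fin ftilde_term_ge0. Qed.

Lemma gtilde_ge0 x : 0 <= x -> (0 <= g x)%E.
Proof. by move=> x0; apply: nneseries_ge0 => l l1 _; rewrite lee_fin gtilde_term_ge0. Qed.

Lemma gtilde_fineK x : 0 <= x -> (g x < +oo)%E -> g x = (fine (g x))%:E.
Proof. by move=> x0 gx; rewrite fineK // ge0_fin_numE ?gtilde_ge0. Qed.

Lemma ftilde0 : f 0 = 0%E.
Proof. by apply: eseries0 => l l1 _; rewrite expr0n gtn_eqF // mulr0. Qed.

Lemma le_ftilde x y : 0 <= x <= y -> (f x <= f y)%E.
Proof.
move=> /andP[x0 xy]; apply: lee_nneseriesEFin => l l1.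
rewrite ftilde_term_ge0 //= ler_wpM2l ?qtilde_ge0 //.
by rewrite lerXn2r // nnegrE (le_trans x0).
Qed.

Lemma ftilde_le_gtilde x : 0 <= x -> (f x <= g x)%E.
Proof.
move=> x0; apply: lee_nneseriesEFin => l l1.
by rewrite ftilde_term_ge0 //= -mulrA ler_peMl ?ler1n ?ftilde_term_ge0.
Qed.

Lemma gtilde_lt_pinfty x : 0 <= x < 1 -> (g x < +oo)%E.
Proof.
move=> x01; have /andP[x0 _] := x01.
have [r1 r1_gt1 r1x] := exists_gt1_mul_lt1 _ x01.
have r1x01 : 0 <= r1 * x < 1 by rewrite r1x andbT mulr_ge0 //; lra.
have [r2 r2_gt1 r2r1x] := exists_gt1_mul_lt1 _ r1x01.
have [C C0 qtC] := qtilde_le_geometric _ r1_gt1.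
have [D D0 lD] := natr_le_geometric _ r2_gt1.
have DC0 : 0 <= D * C by rewrite mulr_ge0 // ltW.
have r2r1x01 : 0 <= r2 * (r1 * x) < 1 by rewrite r2r1x andbT mulr_ge0 //; lra.
apply: le_lt_trans (nneseries_geometric_lt_pinfty 1 _ _ DC0 r2r1x01).
apply: lee_nneseriesEFin => l l1; rewrite gtilde_term_ge0 //=.
have -> : D * C * (r2 * (r1 * x)) ^+ l = D * r2 ^+ l * (C * r1 ^+ l) * x ^+ l.
  by rewrite !exprMn; ring.
by rewrite ler_wpM2r ?exprn_ge0 // ler_pM ?qtilde_ge0 ?lD ?qtC.
Qed.

Lemma ftilde_fin_num x : 0 <= x < 1 -> f x \is a fin_num.
Proof.
move=> x01; have /andP[x0 _] := x01.
rewrite ge0_fin_numE ?ftilde_ge0 //.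
by rewrite (le_lt_trans (ftilde_le_gtilde _ x0)) ?gtilde_lt_pinfty.
Qed.

Lemma ftilde_ge_scaled a b : 0 < a <= b -> ((b / a)%:E * f a <= f b)%E.
Proof.
move=> /andP[a0 ab]; have b0 := lt_le_trans a0 ab.
have ba0 : 0 <= b / a by rewrite divr_ge0 ?ltW.
rewrite /ftilde -nneseriesEFinZl // => [|l]; last exact: ftilde_term_ge0 (ltW a0).
apply: lee_nneseriesEFin => l l1; rewrite mulr_ge0 ?ftilde_term_ge0 ?(ltW a0) //=.
rewrite mulrCA ler_wpM2l ?qtilde_ge0 //; case: l l1 => // k _.
rewrite !exprS mulrA divfK ?gt_eqF // ler_wpM2l ?(ltW b0) //.
by rewrite lerXn2r // nnegrE ltW.
Qed.

Lemma ftilde_eq1_unique a b : 0 < a -> 0 < b -> f a = 1%E -> f b = 1%E -> a = b.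
Proof.
wlog ab : a b / a <= b => [W a0 b0 fa fb|a0 b0 fa fb].
  by case: (leP a b) => [|/ltW] ?; [exact: W | exact/esym/W].
have := ftilde_ge_scaled a b; rewrite a0 ab fa fb mule1 => /(_ isT).
by rewrite lee_fin ler_pdivrMr // mul1r => ba; apply/eqP; rewrite eq_le ab ba.
Qed.

Lemma ftilde_lipschitz x y b : 0 <= x <= y -> y <= b -> 0 < b ->
  (f y <= f x + ((y - x) / b)%:E * g b)%E.
Proof.
move=> /andP[x0 xy] yb b0; have y0 := le_trans x0 xy.
have d0 : 0 <= (y - x) / b by rewrite divr_ge0 ?subr_ge0 // ltW.
rewrite /ftilde /gtilde -nneseriesEFinZl // => [|l]; last exact: gtilde_term_ge0 (ltW b0).
rewrite -nneseriesD => [|l l1 _|l l1 _]; rewrite ?lee_fin ?ftilde_term_ge0 //; last first.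
  by rewrite mulr_ge0 ?gtilde_term_ge0 ?(ltW b0).
under [X in (_ <= X)%E]eq_eseriesr do rewrite -EFinD.
apply: lee_nneseriesEFin => l l1; rewrite ftilde_term_ge0 //=.
rewrite -lerBlDl -mulrBr; case: l l1 => // k _.
have -> : (y - x) / b * (k.+1%:R * qt k.+1 * b ^+ k.+1) =
    qt k.+1 * ((y - x) * (k.+1%:R * b ^+ k)).
  by rewrite exprS; field; rewrite gt_eqF.
by rewrite ler_wpM2l ?qtilde_ge0 // subrXX_le ?x0.
Qed.

Lemma ftilde_lipschitz_fine b : 0 < b < 1 -> forall x y, 0 <= x <= b -> 0 <= y <= b ->
  `|fine (f x) - fine (f y)| <= fine (g b) / b * `|x - y|.
Proof.
move=> /andP[b0 b1] x y.
wlog xy : x y / x <= y => [W xb yb|/andP[x0 xb] /andP[y0 yb]].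
  by case: (leP x y) => [|/ltW] ?; [|rewrite distrC [`|x - y|]distrC]; exact: W.
have fE z : 0 <= z <= b -> f z = (fine (f z))%:E.
  by move=> /andP[z0 zb]; rewrite fineK // ftilde_fin_num // z0 (le_lt_trans zb).
have gE : g b = (fine (g b))%:E.
  by apply: gtilde_fineK; rewrite ?gtilde_lt_pinfty // ltW ?b0.
have := le_ftilde x y; have := ftilde_lipschitz x y b.
rewrite x0 xy yb b0 (fE x) ?x0 // (fE y) ?y0 // gE -EFinM -EFinD !lee_fin.
move=> /(_ isT isT isT) lip /(_ isT) mono.
rewrite distrC ger0_norm ?subr_ge0 // distrC ger0_norm ?subr_ge0 //.
by rewrite mulrAC -mulrA mulrC lerBlDl.
Qed.

Lemma ftilde_gt1_lt1 : (1 < f 1)%E -> exists2 b, 0 < b < 1 & (1 < f b)%E.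
Proof.
move=> f1.
have [n Sn] : exists n, 1 < \sum_(1 <= l < n) qt l.
  apply: contrapT => /forallNP Sle; move: f1; apply/negP; rewrite -leNgt.
  apply: nneseriesEFin_le => [l l1|n]; first exact: ftilde_term_ge0.
  by under eq_bigr do rewrite expr1n mulr1; rewrite leNgt; apply/negP.
pose P x := \sum_(1 <= l < n) qt l * x ^+ l.
have P1 : P 1 = \sum_(1 <= l < n) qt l by rewrite /P; under eq_bigr do rewrite expr1n mulr1.
have P_cont : continuous P.
  apply: (@continuous_big R nat +%R 0 xpredT); first exact: add_continuous.
  by move=> l _ x; apply: cvgMl_tmp; exact: exprn_continuous.
near (1 : R)^'- => b.
exists b; first by apply/andP; split; near: b; [exact: nbhs_left_gt | exact: nbhs_left_lt].
have Pb_le : ((P b)%:E <= f b)%E.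
  by apply: nneseries_partial_le => l; apply: ftilde_term_ge0; near: b; exact: nbhs_left_ge.
apply: lt_le_trans Pb_le; rewrite lte_fin; near: b.
by apply: cvgr_gt (cvg_within_filter _ (P_cont 1)) _ _; rewrite P1.
Unshelve. all: end_near.
Qed.

Lemma ftilde_eq1_exists : (1 <= f 1)%E -> exists mu, 0 < mu <= 1 /\ f mu = 1%E.
Proof.
rewrite le_eqVlt => /predU1P[f1|/ftilde_gt1_lt1[b /andP[b0 b1] fb]].
  by exists 1; rewrite ltr01 lexx -f1.
pose F x := fine (f x).
have fF x : 0 <= x <= b -> f x = (F x)%:E.
  by move=> /andP[x0 xb]; rewrite fineK // ftilde_fin_num // x0 (le_lt_trans xb).
have F_cont : {within `[0, b], continuous F}.
  apply: (@lipschitz_within_continuous _ _ _ (fine (g b) / b)).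
    by rewrite divr_ge0 ?fine_ge0 ?gtilde_ge0 ?(ltW b0).
  move=> x y; rewrite /= !in_itv /=; apply: ftilde_lipschitz_fine.
  by rewrite b0 b1.
have F0 : F 0 = 0 by rewrite /F ftilde0.
have Fb : 1 < F b by rewrite -lte_fin -fF ?lexx ?(ltW b0).
have [|c] := IVT (ltW b0) F_cont (v := 1).
  by rewrite F0 ge_min le_max ler01 (ltW Fb) orbT.
move=> /[!in_itv] /= /andP[c0 cb] Fc; exists c; split.
  rewrite lt_neqAle c0 (le_trans cb (ltW b1)) !andbT.
  by apply: contra_neq (oner_neq0 R) => c_eq0; rewrite -Fc -c_eq0 F0.
by rewrite fF ?c0 ?cb // Fc.
Qed.

Lemma gtilde_root_lt_pinfty mu : (1 < f 1)%E \/ (f 1 = 1%E /\ (g 1 < +oo)%E) ->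
  0 < mu <= 1 -> f mu = 1%E -> (g mu < +oo)%E.
Proof.
move=> EQ /andP[mu0]; rewrite le_eqVlt => /predU1P[->|mu1] fmu.
  by case: EQ => [|[] //]; rewrite fmu ltxx.
by apply: gtilde_lt_pinfty; rewrite mu1 ltW.
Qed.

Lemma Aterm_ge (N mu : R) (z : nat -> R) l :
  0 < N -> 0 < mu -> (1 <= l)%N -> 0 <= z l ->
  l%:R * z l * ln mu + z l - N * (qt l * mu ^+ l) <= Aterm q Rr N z l.
Proof.
move=> N0 mu0 l1 zl0; rewrite /Aterm.
have p0 : 0 < N * (qt l * mu ^+ l) by rewrite mulr_gt0 // mulr_gt0 ?qtilde_gt0 ?exprn_gt0.
have [->|zl_neq0] := eqVneq (z l) 0; first by rewrite mulr0 !mul0r add0r sub0r oppr_le0 ltW.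
have zl_gt0 : 0 < z l by rewrite lt_neqAle eq_sym zl_neq0.
set p := N * (qt l * mu ^+ l) in p0 *.
have -> : z l / (qt l * N) = z l / p * mu ^+ l.
  by rewrite /p; field; rewrite !gt_eqF ?qtilde_gt0 ?exprn_gt0.
rewrite lnM ?posrE ?divr_gt0 ?exprn_gt0 // lnXn // mulrDr -[ln mu *+ l]mulr_natl.
have -> : z l * (l%:R * ln mu) = l%:R * z l * ln mu by ring.
by have := sub_le_mul_ln_div _ _ zl_gt0 p0; lra.
Qed.

Lemma Aterm_le (N c : R) (z : nat -> R) l :
  0 < c -> (1 <= l)%N -> c / 2 ^+ l <= qt l -> 0 <= z l <= N ->
  Aterm q Rr N z l <= - ln c * z l + ln 2 * (l%:R * z l).
Proof.
move=> c0 l1 qt_ge /andP[zl0 zlN]; rewrite /Aterm.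
have [->|zl_neq0] := eqVneq (z l) 0; first by rewrite !mulr0 addr0.
have zl_gt0 : 0 < z l by rewrite lt_neqAle eq_sym zl_neq0.
have N0 : 0 < N := lt_le_trans zl_gt0 zlN.
have qt0 := qtilde_gt0 _ l1.
have ratio_le : z l / (qt l * N) <= 2 ^+ l / c.
  apply: (@le_trans _ _ (qt l)^-1).
    by rewrite ler_pdivrMr ?mulKf ?gt_eqF // mulr_gt0.
  by rewrite -invf_div lef_pV2 ?posrE ?divr_gt0 ?exprn_gt0.
have -> : - ln c * z l + ln 2 * (l%:R * z l) = z l * ln (2 ^+ l / c).
  by rewrite ln_div ?posrE ?exprn_gt0 // lnXn // -[ln 2 *+ l]mulr_natl; ring.
rewrite ler_wpM2l ?(ltW zl_gt0) // ler_ln // posrE divr_gt0 ?exprn_gt0 //.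
exact: mulr_gt0.
Qed.

(* [Atilde] is [limn] of the partial sums, a junk value unless they converge. *)
Lemma Aterm_series_ge (mu N rs : R) z : 0 < mu -> f mu = 1%E -> 0 < N ->
    (forall l, (1 <= l)%N -> 0 <= z l <= N) -> Ntot z = N%:E -> rho z = rs%:E ->
  cvgn (fun n => \sum_(1 <= l < n) Aterm q Rr N z l) /\
  rs * ln mu <= limn (fun n => \sum_(1 <= l < n) Aterm q Rr N z l).
Proof.
move=> mu0 fmu N0 zN NE rz.
have z0 l : (1 <= l)%N -> 0 <= z l by case/zN/andP.
have [c c0 qt_ge] := qtilde_ge_geometric.
have lz0 l : (1 <= l)%N -> 0 <= l%:R * z l by move=> l1; rewrite mulr_ge0 ?z0.
have cvg_rho := nneseries_partial_cvg _ _ _ lz0 rz.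
have cvg_N := nneseries_partial_cvg _ _ _ z0 NE.
have fterm0 l := ftilde_term_ge0 mu l (ltW mu0).
have cvg_f := nneseries_partial_cvg _ _ _ fterm0 fmu.
pose lo l := l%:R * z l * ln mu + z l - N * (qt l * mu ^+ l).
pose up l := - ln c * z l + ln 2 * (l%:R * z l).
have cvg_lo : (fun n => \sum_(1 <= l < n) lo l) @ \oo --> ln mu * rs + N - N * 1.
  have -> : (fun n => \sum_(1 <= l < n) lo l) = (fun n =>
      ln mu * \sum_(1 <= l < n) l%:R * z l + \sum_(1 <= l < n) z l -
      N * \sum_(1 <= l < n) qt l * mu ^+ l).
    apply/funext => n; rewrite sumrB big_split !mulr_sumr /=.
    by congr (_ + _ - _); apply: eq_bigr => l _; rewrite mulrC.
  apply: cvgB; first apply: cvgD.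
  - exact: cvgMl_tmp cvg_rho.
  - exact: cvg_N.
  - exact: cvgMl_tmp cvg_f.
have cvg_up : (fun n => \sum_(1 <= l < n) up l) @ \oo --> - ln c * N + ln 2 * rs.
  have -> : (fun n => \sum_(1 <= l < n) up l) = (fun n =>
      - ln c * \sum_(1 <= l < n) z l + ln 2 * \sum_(1 <= l < n) l%:R * z l).
    by apply/funext => n; rewrite big_split !mulr_sumr.
  by apply: cvgD; [exact: cvgMl_tmp cvg_N | exact: cvgMl_tmp cvg_rho].
have bounds l : (1 <= l)%N -> lo l <= Aterm q Rr N z l <= up l.
  by move=> l1; rewrite Aterm_ge ?Aterm_le ?zN ?z0 ?qt_ge.
have [cvgA] := series_sandwich_cvg _ _ _ _ _ _ bounds cvg_lo cvg_up.
by rewrite mulr1 addrK mulrC.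
Qed.

Lemma Atilde_ge (mu rs : R) z : 0 < mu -> f mu = 1%E -> 0 < rs ->
  X0plus z -> rho z = rs%:E -> rs * ln mu <= Atilde q Rr z.
Proof.
move=> mu0 fmu rs0 Xz rz; have [z0 _] := Xz.
have [j j1 zj] : exists2 j, (1 <= j)%N & z j != 0.
  apply: contrapT => nj; move: rz; rewrite /rho eseries0 => [[]|l l1 _].
    by move/eqP; rewrite eq_sym gt_eqF.
  by have [->|zl] := eqVneq (z l) 0; [rewrite mulr0 | case: nj; exists l].
rewrite /Atilde asboolF => [|z_eq0]; last by rewrite z_eq0 ?eqxx in zj.
set N := fine (Ntot z); have NE : Ntot z = N%:E by rewrite fineK ?Ntot_fin_num.
have zN l : (1 <= l)%N -> z l <= N by move=> l1; rewrite -lee_fin -NE le_Ntot.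
have N0 : 0 < N by apply: lt_le_trans (zN _ j1); rewrite lt_neqAle eq_sym zj z0.
have [] // := Aterm_series_ge mu N rs z mu0 fmu N0 _ NE rz.
by move=> l l1; rewrite z0 ?zN.
Qed.

Lemma fine_gtilde_gt0 (mu : R) : 0 < mu -> (g mu < +oo)%E -> 0 < fine (g mu).
Proof.
move=> mu0 g_fin.
have := nneseries_partial_le _ _ 2 (fun l => gtilde_term_ge0 mu l (ltW mu0)).
rewrite big_nat1 mul1r.
have gE := gtilde_fineK _ (ltW mu0) g_fin.
rewrite -/(g mu) gE lee_fin; apply: lt_le_trans.
by rewrite mulr_gt0 ?qtilde_gt0 ?expr1.
Qed.

Definition gibbs_seq (N mu : R) (l : nat) : R := N * qt l * mu ^+ l.

Lemma rho_gibbs_seq (N mu : R) : 0 <= N -> 0 <= mu ->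
  rho (gibbs_seq N mu) = (N%:E * g mu)%E.
Proof.
move=> N0 mu0; rewrite /rho /gtilde -nneseriesEFinZl // => [|l].
  by apply: eq_eseriesr => l _; rewrite /gibbs_seq; congr EFin; ring.
exact: gtilde_term_ge0.
Qed.

Lemma Ntot_gibbs_seq (N mu : R) : 0 <= N -> 0 <= mu ->
  Ntot (gibbs_seq N mu) = (N%:E * f mu)%E.
Proof.
move=> N0 mu0; rewrite /Ntot /ftilde -nneseriesEFinZl // => [|l].
  by apply: eq_eseriesr => l _; rewrite /gibbs_seq; congr EFin; ring.
exact: ftilde_term_ge0.
Qed.

Lemma X0plus_gibbs_seq (N mu : R) : 0 <= N -> 0 <= mu -> (g mu < +oo)%E ->
  X0plus (gibbs_seq N mu).
Proof.
move=> N0 mu0 g_fin; split => [l l1|].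
  by rewrite /gibbs_seq -mulrA mulr_ge0 ?ftilde_term_ge0.
by rewrite rho_gibbs_seq // (gtilde_fineK _ mu0 g_fin) -EFinM ltey.
Qed.

Lemma Atilde_gibbs_seq (N mu : R) :
  0 < N -> 0 < mu -> f mu = 1%E -> (g mu < +oo)%E ->
  Atilde q Rr (gibbs_seq N mu) = N * fine (g mu) * ln mu.
Proof.
move=> N0 mu0 fmu g_fin; set z := gibbs_seq N mu.
have z_gt0 l : (1 <= l)%N -> 0 < z l.
  by move=> l1; rewrite mulr_gt0 ?exprn_gt0 // mulr_gt0 ?qtilde_gt0.
rewrite /Atilde asboolF => [|z_eq0]; last by have := z_gt0 1%N isT; rewrite z_eq0 ?ltxx.
rewrite Ntot_gibbs_seq ?(ltW N0) ?(ltW mu0) // fmu mule1 /=.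
have Aterm_z l : (1 <= l)%N -> Aterm q Rr N z l = ln mu * (l%:R * z l).
  move=> l1; rewrite /Aterm gt_eqF ?z_gt0 //.
  have -> : z l / (qt l * N) = mu ^+ l.
    by rewrite /z /gibbs_seq; field; rewrite !gt_eqF ?qtilde_gt0.
  by rewrite lnXn // -[ln mu *+ l]mulr_natl; ring.
have gE := gtilde_fineK _ (ltW mu0) g_fin.
have rho_z : rho z = (N * fine (g mu))%:E.
  by rewrite rho_gibbs_seq ?(ltW N0) ?(ltW mu0) // gE.
have lz0 l : (1 <= l)%N -> 0 <= l%:R * z l by move=> l1; rewrite mulr_ge0 // ltW ?z_gt0.
have -> : (fun n => \sum_(1 <= l < n) Aterm q Rr N z l) =
    (fun n => ln mu * \sum_(1 <= l < n) l%:R * z l).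
  apply/funext => n; rewrite mulr_sumr.
  by apply: eq_big_nat => l /andP[l1 _]; rewrite Aterm_z.
rewrite mulrC; apply: cvg_lim => //; apply: cvgMl_tmp.
exact: nneseries_partial_cvg lz0 rho_z.
Qed.

End qtilde_theory.

Theorem theorem8 (R : realType) (q : nat -> R) (Rr : R) (rhostar : R)
  (qpos : forall l, (1 <= l)%N -> 0 < q l)
  (q1 : q 1%N = 1)
  (Rpos : 0 < Rr)
  (Rlim : (fun l => q l / q l.+1) @ \oo --> Rr)
  (EQ : (1 < ftilde q Rr 1)%E \/
        (ftilde q Rr 1 = 1%E /\ (gtilde q Rr 1 < +oo)%E))
  (rhopos : 0 < rhostar) :
  (exists! mu : R, (0 < mu <= 1) /\ ftilde q Rr mu = 1%E) /\
  forall mu : R, 0 < mu <= 1 -> ftilde q Rr mu = 1%E ->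
    let Nstar := rhostar / fine (gtilde q Rr mu) in
    let zstar := fun l : nat => Nstar * qtilde q Rr l * mu ^+ l in
    (gtilde q Rr mu < +oo)%E /\
    X0plus zstar /\ rho zstar = rhostar%:E /\
    (forall z : nat -> R, X0plus z -> rho z = rhostar%:E ->
       Atilde q Rr zstar <= Atilde q Rr z).
Proof.
have f1_ge1 : (1 <= ftilde q Rr 1)%E by case: EQ => [/ltW|[->]].
split.
  have [mu [mu01 fmu]] := ftilde_eq1_exists q Rr qpos Rpos Rlim f1_ge1.
  exists mu; split => // mu' [/andP[mu'0 _] fmu'].
  by case/andP: mu01 => mu0 _; exact: ftilde_eq1_unique fmu fmu'.
move=> mu mu01 fmu Nstar zstar; have /andP[mu0 _] := mu01.
have g_fin := gtilde_root_lt_pinfty q Rr qpos Rpos Rlim mu EQ mu01 fmu.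
have G0 := fine_gtilde_gt0 q Rr qpos Rpos mu mu0 g_fin.
have N0 : 0 < Nstar by rewrite divr_gt0.
have zstarE : zstar = gibbs_seq q Rr Nstar mu by [].
have rho_z : rho zstar = rhostar%:E.
  rewrite zstarE rho_gibbs_seq ?(ltW N0) ?(ltW mu0) //.
  by rewrite (gtilde_fineK q Rr qpos Rpos _ (ltW mu0) g_fin) -EFinM divfK ?gt_eqF.
split => //; split.
  by rewrite zstarE; exact: X0plus_gibbs_seq q Rr qpos Rpos _ _ (ltW N0) (ltW mu0) g_fin.
split => // z Xz rz.
rewrite zstarE Atilde_gibbs_seq // divfK ?gt_eqF //.
exact: Atilde_ge q Rr qpos Rpos Rlim mu rhostar z mu0 fmu rhopos Xz rz.
Qed.
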